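(* Let $S=(n,X,U,f,Y,h,x_0)$, $\widehat{S}=(\widehat{n},\widehat{X},\widehat{U},\widehat{f},\widehat{Y},\widehat{h},\widehat{x}_0)$ and $\widehat{\widehat{S}}=(\widehat{\widehat{n}},\widehat{\widehat{X}},\widehat{\widehat{U}},\widehat{\widehat{f}},\widehat{\widehat{Y}},\widehat{\widehat{h}},\widehat{\widehat{x}}_0)$ be deterministic multi-robot transition systems. If $\widehat{\widehat{S}}$ is an $(\widehat{n},\widehat{\tau})$-illusion of $\widehat{S}$, and $\widehat{S}$ is an $(m,\tau)$-illusion of $S$, then $\widehat{\widehat{S}}$ is an $(m,\tau\cdot\widehat{\tau})$-illusion of $S$.
   Context: A deterministic multi-robot transition system is a 7-tuple $(n,X,U,f,Y,h,x_0)$ where $n$ is a positive integer (the number of robots); $X=X^{(1)}\times\cdots\times X^{(n)}$ is the state space; $U=U^{(1)}\times\cdots\times U^{(n)}$ is the action space; $f:X\times U\to X$ is the transition function given by robot transition functions $f^{(i)}$ via $f(x,(u^{(1)},\dots,u^{(n)}))=(f^{(1)}(x,u^{(1)}),\dots,f^{(n)}(x,u^{(n)}))$; $Y=Y^{(1)}\times\cdots\times Y^{(n)}$ is the observation space; $h:X\to Y$ is given by robot observation functions via $h(x)=(h^{(1)}(x),\dots,h^{(n)}(x))$; and $x_0\in X$ is the initial state. The system evolves in discrete time by $x_{k+1}=f(x_k,u_k)$, $y_k=h(x_k)$. Superscripts in parentheses index robots, subscripts index time. When one system $\widehat{S}$ (the primary system; its quantities carry hats) is used to emulate another system $S$ (the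 secondary system), a robot policy $\widehat{\pi}^{(i)}$ for robot $i$ of $\widehat{S}$ is a function mapping robot $i$'s own action history $\widehat{u}^{(i)}_0,\dots,\widehat{u}^{(i)}_k$, its own observation history $\widehat{y}^{(i)}_0,\dots,\widehat{y}^{(i)}_k$, and the history $x_0,\dots,x_\ell$ of states of the secondary system (where $\ell$ may differ from $k$, as the two systems may run on different time scales) to an action $\widehat{u}^{(i)}_k\in\widehat{U}^{(i)}$. Robot policies in $S$ choose actions of $S$ from histories in the same manner. For systems $S=(n,X,U,f,Y,h,x_0)$ and $\widehat{S}=(\widehat{n},\widehat{X},\widehat{U},\widehat{f},\widehat{Y},\widehat{h},\widehat{x}_0)$ and an integer $0<m\le n$, $\widehat{S}$ is an $m$-illusion of $S$ if there exist (i) robot policies $\widehat{\pi}^{(1)},\dots,\widehat{\pi}^{(\widehat{n})}$ in $\widehat{S}$, (ii) a strictly increasing function $z:\mathbb{Z}^+\to\mathbb{Z}^+$, and (iii) an infinite sequence of functions $\rho_k:\{1,\dots,m\}\to\{1,\dots,\widehat{n}\}$, such that for any robot policies $\pi^{(1)},\dots,\pi^{(n)}$ in $S$, for all $k\ge 0$ and all $1\le i\le m$, $h^{(i)}(x_k)=\widehat{h}^{(\rho_k(i))}(\widehat{x}_{z(k)})$, where $x_k$ is the state trajectory of $S$ and $\widehat{x}$ that of $\widehat{S}$. The tuple $(\widehat{\pi},(\rho_1,\rho_2,\dots),z)$ is called a witness. If $\widehat{S}$ is an $m$-illusion of $S$ with a witness for which the sequence $z(2)-z(1),z(3)-z(2),z(4)-z(3),\dots$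 is bounded above by $\tau$, then it is an $(m,\tau)$-illusion; $\tau$ (an integer) is the slowdown. *)

From mathcomp Require Import all_boot.
Unset Strict Implicit. Unset Printing Implicit Defensive.

(* Robots are indexed by
   'I_n (paper robot i <-> ordinal i-1).  All observation spaces are taken
   inside one ambient type O (shared by the systems being compared), so that
   observations of different systems can be compared with "=". *)
Record mrts (O : Type) := MRTS {
  nrob : nat;
  nrob_gt0 : 0 < nrob;
  Xr : 'I_nrob -> Type;
  Ur : 'I_nrob -> Type;
  fr : forall i : 'I_nrob, (forall j, Xr j) -> Ur i -> Xr i;
  hr : 'I_nrob -> (forall j, Xr j) -> O;
  x0 : forall j, Xr j
}.
Arguments nrob {O}.
Arguments Xr {O} _ _.
Arguments Ur {O} _ _.
Arguments fr {O} _ _ _ _.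
Arguments hr {O} _ _ _.
Arguments x0 {O} _ _.

Section Defs.
Variable O : Type.

Definition state (S : mrts O) := forall j, Xr S j.
Definition action (S : mrts O) := forall j, Ur S j.

Definition step (S : mrts O) (x : state S) (u : action S) : state S :=
  fun i => fr S i x (u i).

(* A decision rule: given the time k, the state history x_0..x_k and the
   action history u_0..u_{k-1}, returns the joint action u_k. *)
Definition decision (S : mrts O) :=
  nat -> seq (state S) -> seq (action S) -> action S.

(* hist k = ([:: x_0; ..; x_k], [:: u_0; ..; u_{k-1}]) *)
Fixpoint hist (S : mrts O) (dec : decision S) (k : nat)
  : seq (state S) * seq (action S) :=
  match k with
  | 0 => ([:: x0 S], [::])
  | k'.+1 =>
      let: (xs, us) := hist S dec k' in
      let u := dec k' xs us in
      (rcons xs (step S (last (x0 S) xs) u), rcons us u)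
  end.

Definition traj (S : mrts O) (dec : decision S) (k : nat) : state S :=
  last (x0 S) (hist S dec k).1.

(* Robot policies of a system run on its own (secondary role):
   own action history, own observation history -> action. *)
Definition sec_policy (S : mrts O) :=
  forall i : 'I_(nrob S), seq (Ur S i) -> seq O -> Ur S i.

Definition sec_dec (S : mrts O) (pi : sec_policy S) : decision S :=
  fun _ xs us i => pi i [seq u i | u <- us] [seq hr S i x | x <- xs].

(* Robot policies of a primary system Sh emulating S:
   own action history, own observation history, history x_0..x_l of the
   secondary states -> action. *)
Definition prim_policy (S Sh : mrts O) :=
  forall i : 'I_(nrob Sh), seq (Ur Sh i) -> seq O -> seq (state S) -> Ur Sh i.

(* number of secondary steps k with z k <= j: at primary time j the primary
   knows the secondary states x_0 .. x_(ell z j) *)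
Definition ell (z : nat -> nat) (j : nat) : nat :=
  count (fun t => z t <= j) (iota 0 j.+1).

Definition prim_dec (S Sh : mrts O) (pih : prim_policy S Sh) (z : nat -> nat)
  (x : nat -> state S) : decision Sh :=
  fun j xs us i =>
    pih i [seq u i | u <- us] [seq hr Sh i y | y <- xs] (mkseq x (ell z j).+1).

Definition illusion (S Sh : mrts O) (m tau : nat) : Prop :=
  (0 < m <= nrob S) /\
  exists (pih : prim_policy S Sh) (rho : nat -> 'I_(nrob S) -> 'I_(nrob Sh))
         (z : nat -> nat),
    (forall k, z k < z k.+1) /\
    (forall k, 0 < k -> z k.+1 - z k <= tau) /\
    forall pi : sec_policy S,
      forall (k : nat) (i : 'I_(nrob S)), i < m ->
        hr S i (traj S (sec_dec S pi) k) =
        hr Sh (rho k i)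
          (traj Sh (prim_dec S Sh pih z (traj S (sec_dec S pi))) (z k)).

End Defs.
Arguments illusion {O} S Sh m tau.

(* Shh drives its robots with the policy of the Sh-emulation, fed with a
   trajectory of Sh that it reconstructs itself: at its time j it knows the
   states of S up to index ell (zh \o z) j, and by causality of the
   Sh-emulation these determine the states of Sh up to index ell zh j, which
   is all that the Shh-policy needs.  Observations then agree along the
   composed time map zh \o z, whose gaps are at most tau * tauh. *)
From Stdlib Require Import FunctionalExtensionality.
From mathcomp Require Import all_boot.
From mathcomp Require Import zify.

Arguments state {O}. Arguments action {O}. Arguments step {O}.
Arguments decision {O}. Arguments hist {O}. Arguments traj {O}.
Arguments sec_policy {O}. Arguments sec_dec {O}. Arguments prim_policy {O}.
Arguments prim_dec {O}.

Lemma ltn_count_iota_downclosed (P : pred nat) n k :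
  (forall a b, a <= b -> P b -> P a) ->
  (k < count P (iota 0 n)) = (k < n) && P k.
Proof.
move=> P_down; elim: n k => [|n IHn] k; first by rewrite ltn0.
rewrite -[n.+1]addn1 iotaD count_cat /= add0n addn0 addn1 ltnS.
have [Pn | nPn] := boolP (P n); last first.
  rewrite addn0 IHn [k <= n]leq_eqVlt.
  by case: eqP => [->|] //=; rewrite ltnn (negbTE nPn).
have /eqP-> : count P (iota 0 n) == n.
  rewrite -[X in _ == X](size_iota 0 n) -all_count.
  apply/allP => t; rewrite mem_iota => /andP[_ /ltnW le_tn].
  exact: P_down Pn.
by rewrite addn1 ltnS; case: leqP => //= le_kn; rewrite (P_down _ _ le_kn Pn).
Qed.

Section Increasing.
Variable f : nat -> nat.
Hypothesis f_incr : forall k, f k < f k.+1.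

Lemma incr_leq_mono : {mono f : m n / m <= n}.
Proof. exact/leq_mono/(homo_ltn ltn_trans). Qed.

Lemma leq_incr_id k : k <= f k.
Proof. by elim: k => // k IHk; apply: leq_ltn_trans IHk (f_incr k). Qed.

Lemma ltn_ell j k : (k < ell f j) = (f k <= j).
Proof.
rewrite /ell ltn_count_iota_downclosed; last first.
  by move=> a b le_ab; apply: leq_trans; rewrite incr_leq_mono.
by rewrite andb_idl // => le_fkj; rewrite ltnS (leq_trans (leq_incr_id k)).
Qed.

Lemma subn_incr_gap tau :
  (forall k, 0 < k -> f k.+1 - f k <= tau) ->
  forall a d, 0 < a -> f (a + d) - f a <= tau * d.
Proof.
move=> f_gap a d a_gt0; elim: d => [|d IHd]; first by rewrite addn0 subnn.
have := f_gap (a + d) (ltn_addr d a_gt0); have := f_incr (a + d).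
have : f a <= f (a + d) by rewrite incr_leq_mono leq_addr.
rewrite addnS mulnS; lia.
Qed.

End Increasing.

Lemma leq_ell (z z' : nat -> nat) j j' :
  (forall k, z k < z k.+1) -> (forall k, z' k < z' k.+1) ->
  (forall k, z k <= j -> z' k <= j') -> ell z j <= ell z' j'.
Proof.
move=> z_incr z'_incr z_z'; rewrite leqNgt; apply/negP.
by rewrite (ltn_ell _ z_incr) => /z_z'; rewrite -(ltn_ell _ z'_incr) ltnn.
Qed.

Lemma incr_comp {z zh : nat -> nat} :
  (forall k, z k < z k.+1) -> (forall k, zh k < zh k.+1) ->
  forall k, (zh \o z) k < (zh \o z) k.+1.
Proof.
by move=> z_incr zh_incr k; rewrite (leqW_mono (incr_leq_mono _ zh_incr)).
Qed.

Lemma comp_gap {z zh : nat -> nat} {tau tauh : nat} :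
  (forall k, z k < z k.+1) -> (forall k, 0 < k -> z k.+1 - z k <= tau) ->
  (forall k, zh k < zh k.+1) -> (forall k, 0 < k -> zh k.+1 - zh k <= tauh) ->
  forall k, 0 < k -> (zh \o z) k.+1 - (zh \o z) k <= tau * tauh.
Proof.
move=> z_incr z_gap zh_incr zh_gap k k_gt0.
have zk_gt0 : 0 < z k by apply: leq_trans k_gt0 (leq_incr_id _ z_incr k).
rewrite /= -(subnKC (ltnW (z_incr k))) mulnC.
apply: leq_trans (subn_incr_gap _ zh_incr _ zh_gap _ _ zk_gt0) _.
exact: leq_mul (leqnn tauh) (z_gap k k_gt0).
Qed.

Section Histories.
Context {O : Type} {S : mrts O}.

Lemma size_hist_actions (dec : decision S) k : size (hist S dec k).2 = k.
Proof.
elim: k => //= k.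
by case: (hist S dec k) => xs us /= size_us; rewrite size_rcons size_us.
Qed.

Lemma eq_hist (d1 d2 : decision S) t :
  (forall j xs us i, j < t -> size us = j -> d1 j xs us i = d2 j xs us i) ->
  hist S d1 t = hist S d2 t.
Proof.
move=> d12; suff: forall s, s <= t -> hist S d1 s = hist S d2 s by apply.
elim=> [|s IHs] lt_st //=; rewrite IHs ?(ltnW lt_st) //.
case E: (hist S d2 s) => [xs us].
have size_us : size us = s by rewrite -(size_hist_actions d2 s) E.
have -> // : d1 s xs us = d2 s xs us.
by apply: functional_extensionality_dep => i; apply: d12.
Qed.

Lemma eq_traj (d1 d2 : decision S) t :
  (forall j xs us i, j < t -> size us = j -> d1 j xs us i = d2 j xs us i) ->
  traj S d1 t = traj S d2 t.
Proof. by rewrite /traj => /eq_hist ->. Qed.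

End Histories.

Section Emulation.
Context {O : Type} {S Sh : mrts O}.
Variables (pih : prim_policy S Sh) (z : nat -> nat).

Definition sec_of_prim (x : nat -> state S) : sec_policy Sh :=
  fun i us ys => pih i us ys (mkseq x (ell z (size us)).+1).

Lemma traj_sec_of_prim x :
  traj Sh (sec_dec Sh (sec_of_prim x)) = traj Sh (prim_dec S Sh pih z x).
Proof.
apply: functional_extensionality => t; apply: eq_traj => j xs us i _ size_us.
by rewrite /sec_dec /prim_dec /sec_of_prim size_map size_us.
Qed.

Lemma eq_traj_prim_dec x x' t :
  (forall j s, j < t -> s <= ell z j -> x s = x' s) ->
  traj Sh (prim_dec S Sh pih z x) t = traj Sh (prim_dec S Sh pih z x') t.
Proof.
move=> eq_x; apply: eq_traj => j xs us i lt_jt _; rewrite /prim_dec.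
congr pih; apply/eq_in_map => s; rewrite mem_iota add0n ltnS => /andP[_].
exact: eq_x.
Qed.

End Emulation.

Section Composition.
Context {O : Type} {S Sh Shh : mrts O}.
Variables (pih : prim_policy S Sh) (z : nat -> nat).
Variables (pihh : prim_policy Sh Shh) (zh : nat -> nat).
Hypothesis z_incr : forall k, z k < z k.+1.
Hypothesis zh_incr : forall k, zh k < zh k.+1.

(* The padding default [x0 S] of [nth] is never read: see [traj_prim_comp]. *)
Definition prim_comp : prim_policy S Shh := fun i us ys xs =>
  let y := traj Sh (prim_dec S Sh pih z (nth (x0 S) xs)) in
  pihh i us ys (mkseq y (ell zh (size us)).+1).

Lemma traj_prim_comp x t :
  traj Shh (prim_dec S Shh prim_comp (zh \o z) x) t =
  traj Shh (prim_dec Sh Shh pihh zh (traj Sh (prim_dec S Sh pih z x))) t.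
Proof.
apply: eq_traj => j xs us i _ size_us.
rewrite /prim_dec /prim_comp size_map size_us; congr pihh.
apply/eq_in_map => t'; rewrite mem_iota add0n ltnS => /andP[_ le_t'j].
apply: eq_traj_prim_dec => j' s lt_j't' le_s.
have le_zhj'_j : zh j' <= j by rewrite -ltn_ell // (leq_trans lt_j't').
rewrite nth_mkseq // ltnS (leq_trans le_s) //.
apply: leq_ell => // [|k le_zkj']; first exact: incr_comp z_incr zh_incr.
by apply: (leq_trans _ le_zhj'_j); rewrite (incr_leq_mono _ zh_incr).
Qed.

End Composition.

Theorem theorem2 (O : Type) (S Sh Shh : mrts O) (m tau tauh : nat) :
  illusion Sh Shh (nrob Sh) tauh ->
  illusion S Sh m tau ->
  illusion S Shh m (tau * tauh).
Proof.
move=> [_ [pihh [rhoh [zh [zh_incr [zh_gap Hh]]]]]]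
       [Hm [pih [rho [z [z_incr [z_gap H]]]]]].
split=> //.
exists (prim_comp pih z pihh zh), (fun k i => rhoh (z k) (rho k i)), (zh \o z).
split; first exact: incr_comp z_incr zh_incr.
split; first exact: comp_gap z_incr z_gap zh_incr zh_gap.
move=> pi k i lt_im.
rewrite (H pi k i lt_im) -traj_sec_of_prim (Hh _ (z k) _ (ltn_ord _)).
by rewrite traj_sec_of_prim traj_prim_comp.
Qed.
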